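(* Let $(p_{ij}\colon X_j\to X_i)_{i\sqsubseteq j\in I}$ be a projective system of sober spaces and $X,(p_i)_{i\in I}$ its canonical projective limit. Then: (1) whenever $Q_i$ is a compact saturated subset of $X_i$ for each $i\in I$ and $p_{ij}[Q_j]\subseteq Q_i$ for all $i\sqsubseteq j$, the canonical projective limit of the system $(p_{ij}|_{Q_j}\colon Q_j\to Q_i)_{i\sqsubseteq j\in I}$ (i.e., $\{\vec x\in X\mid x_i\in Q_i \text{ for all } i\}$) is a compact saturated subset of $X$; (2) every compact saturated subset $K$ of $X$ is the canonical projective limit of such a system, with $Q_i:=\uparrow p_i[K]$ for each $i\in I$, and moreover $\uparrow p_{ij}[Q_j]=Q_i$ for all $i\sqsubseteq j\in I$.
   Context: A projective system of topological spaces consists of a directed preordered set $(I,\sqsubseteq)$, spaces $X_i$ and continuous maps $p_{ij}\colon X_j\to X_i$ for $i\sqsubseteq j$ with $p_{ii}=\mathrm{id}$ and $p_{ij}\circ p_{jk}=p_{ik}$. Its canonical projective limit is $X=\{\vec x\in\prod_i X_i\mid p_{ij}(x_j)=x_i \text{ for all } i\sqsubseteq j\}$ with the subspace topology of the product and $p_i$ the $i$th projection. The specialization preorder is $x\le y$ iff every open neighbourhood of $x$ contains $y$; $\uparrow A$ is the set of points above some element of $A$; saturated means upward closed. Sober: $T_0$ and every irreducible closed set is the closure of a point. Compactness assumes no separation axiom; subsets $Q_i$ are considered as subspaces. *)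

From HB Require Import structures.
From mathcomp Require Import all_boot all_order all_algebra.
From mathcomp Require Import all_classical all_reals all_analysis.
Set Implicit Arguments.
Unset Strict Implicit.
Unset Printing Implicit Defensive.
Local Open Scope classical_set_scope.

Definition spec_le {T : topologicalType} (x y : T) : Prop :=
  forall U : set T, open U -> U x -> U y.

Definition upset {T : topologicalType} (A : set T) : set T :=
  [set y | exists2 x, A x & spec_le x y].

Definition saturated {T : topologicalType} (A : set T) : Prop :=
  forall x y, A x -> spec_le x y -> A y.

Definition irreducible_closed {T : topologicalType} (F : set T) : Prop :=
  [/\ F !=set0, closed F &
      forall A B : set T, closed A -> closed B -> F `<=` A `|` B ->
        F `<=` A \/ F `<=` B].

Definition sober (T : topologicalType) : Prop :=
  @kolmogorov_space T /\
  forall F : set T, irreducible_closed F -> exists x : T, F = closure [set x].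

Definition directed_preorder {I : Type} (le : I -> I -> Prop) : Prop :=
  [/\ forall i, le i i,
      forall i j k, le i j -> le j k -> le i k,
      inhabited I &
      forall i j, exists k, le i k /\ le j k].

Definition projective_system {I : Type} (le : I -> I -> Prop)
    (X : I -> topologicalType) (p : forall i j, X j -> X i) : Prop :=
  [/\ directed_preorder le,
      forall i j, le i j -> continuous (p i j),
      forall i (x : X i), p i i x = x &
      forall i j k, le i j -> le j k -> forall x : X k,
        p i j (p j k x) = p i k x].

Definition proj_lim {I : Type} (le : I -> I -> Prop)
    (X : I -> topologicalType) (p : forall i j, X j -> X i)
    : set (prod_topology X) :=
  [set x | forall i j, le i j -> p i j (x j) = x i].

Definition proj_lim_space {I : Type} (le : I -> I -> Prop)
    (X : I -> topologicalType) (p : forall i j, X j -> X i) : topologicalType :=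
  set_type (proj_lim le p).

From HB Require Import structures.
From mathcomp Require Import all_boot all_order all_algebra.
From mathcomp Require Import all_classical all_reals all_analysis.
Local Open Scope classical_set_scope.

(* (1) is Stone's argument that a limit of compact sober spaces is compact.
   Given a proper filter F containing L = lim Q_i, Zorn's lemma gives a
   maximal family Z of pairs (i, U), U open in X_i, that contains every U
   whose cylinder F eventually avoids, is stable under preimages along the
   bonding maps and under binary unions, and never covers Q_i.  Let V_i be
   the union of the U with (i, U) in Z.  Since Q_i is compact and these U
   are directed, V_i does not cover Q_i; maximality of Z makes each ~V_i
   irreducible.  Sobriety provides generic points x_i of the ~V_i; they
   form a thread, which lies in L because the Q_i are saturated, and which
   is a cluster point of F because Z contains the opens avoided by F.
   (2) Let x_i lie in the upper set of p_i[K] for all i, with x not in K.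
   As K is saturated, every point of K has a basic cylinder neighbourhood
   missing x; by compactness and directedness a single cylinder over some
   open U of X_i contains K and misses x.  But x_i lies above some p_i(k)
   with k in K, so x_i is in U. *)

Lemma Zorn_bigcup_above {T : Type} {P : set (set T)} {A0 : set T} :
  P A0 ->
  (forall F : set (set T), F `<=` P -> F !=set0 -> total_on F subset ->
    P (\bigcup_(A in F) A)) ->
  exists A, [/\ A0 `<=` A, P A & forall B, A `<` B -> ~ P B].
Proof.
move=> PA0 chainP.
(* Working with [A0 `|` A] disposes of the empty chain. *)
pose P' := [set A | P (A0 `|` A)].
have [A [P'A maxA]] : exists A, P' A /\ forall B, A `<` B -> ~ P' B.
  apply: Zorn_bigcup => F FP' totF.
  rewrite /P' /=; have [->|/set0P[A FA]] := eqVneq F set0; first by rewrite bigcup_set0 setU0.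
  have -> : A0 `|` \bigcup_(B in F) B = \bigcup_(B in (setU A0) @` F) B.
    apply/seteqP; split=> [x [A0x|[B FB Bx]]|x [_ [B FB <-] [A0x|Bx]]].
    - by exists (A0 `|` A); [exists A|left].
    - by exists (A0 `|` B); [exists B|right].
    - by left.
    - by right; exists B.
  apply: chainP; first by move=> _ [B FB <-]; exact: FP'.
    by exists (A0 `|` A), A.
  move=> _ _ [B FB <-] [C FC <-].
  by have [BC|CB] := totF _ _ FB FC; [left|right]; apply: setUS.
exists (A0 `|` A); split => //.
move=> B [AB nBA] PB; apply: (maxA B).
  by split=> [x Ax|BA]; [apply: AB; right|apply: nBA => x /BA; right].
by rewrite /P' /= (setUidr (subset_trans (@subsetUl _ A0 A) AB)).
Qed.

Section specialization.
Variable T : topologicalType.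
Implicit Types (x y z : T) (A : set T).

Lemma spec_le_trans x y z : spec_le x y -> spec_le y z -> spec_le x z.
Proof. by move=> xy yz U oU Ux; apply: yz => //; apply: xy. Qed.

Lemma closure1_spec_le x y : closure [set x] y <-> spec_le y x.
Proof.
split=> [xy U oU Uy|yx B].
  by have [_ [/= -> //]] := xy U (open_nbhs_nbhs (conj oU Uy)).
by rewrite nbhsE => -[W [oW Wy] WB]; exists x; split => //; apply: WB; apply: yx.
Qed.

Lemma spec_le_anti x y : kolmogorov_space T ->
  spec_le x y -> spec_le y x -> x = y.
Proof.
move=> T0 xy yx; apply: contrapT => /eqP /T0 [A [[nA nyA]|[nA nxA]]].
- move: nA; rewrite inE nbhsE => -[W [oW Wx] WA].
  by move: nyA; rewrite inE; apply; apply: WA; apply: xy.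
- move: nA; rewrite inE nbhsE => -[W [oW Wy] WA].
  by move: nxA; rewrite inE; apply; apply: WA; apply: yx.
Qed.

Lemma upset_saturated A : saturated (upset A).
Proof. by move=> x y [z Az zx] xy; exists z => //; apply: spec_le_trans xy. Qed.

Lemma compact_upset A : compact A -> compact (upset A).
Proof.
move=> cA F PF FA.
pose down (C : set T) := [set a | exists2 c, C c & spec_le a c].
pose G := filter_from F (fun C => A `&` down C).
have PG : ProperFilter G.
  apply: filter_from_proper => [|C FC].
    apply: filter_from_filter; first by exists setT; exact: filterT.
    move=> C C' FC FC'; exists (C `&` C'); first exact: filterI.
    by move=> a [Aa [c [Cc C'c] ac]]; split; split => //; exists c.
  have [c [Cc [a Aa ac]]] := filter_ex (filterI FC FA).
  by exists a; split => //; exists c.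
have [|q [Aq clq]] := cA _ PG; first by exists setT; [exact: filterT|move=> x []].
exists q; split; first by exists q.
move=> C N FC; rewrite nbhsE => -[W [oW Wq] WN].
have [a [[_ [c Cc ac]] Wa]] :=
  clq _ W (ex_intro2 _ _ C FC (fun x h => h)) (open_nbhs_nbhs (conj oW Wq)).
by exists c; split => //; apply: WN; apply: ac.
Qed.

Lemma compact_directed_cover A (D : set (set T)) :
  compact A -> (forall U, D U -> open U) -> D !=set0 ->
  (forall U V, D U -> D V -> exists2 W, D W & U `|` V `<=` W) ->
  A `<=` \bigcup_(U in D) U -> exists2 U, D U & A `<=` U.
Proof.
move=> cA oD [U0 DU0] dirD AD; apply: contrapT => noU.
have AnU U : D U -> (A `\` U) !=set0.
  by move=> DU; apply/set0P/eqP; rewrite setD_eq0 => AU; apply: noU; exists U.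
pose G := filter_from D (fun U => A `\` U).
have PG : ProperFilter G.
  apply: filter_from_proper => //; apply: filter_from_filter; first by exists U0.
  move=> U V DU DV; have [W DW UVW] := dirD U V DU DV.
  by exists W => // x [Ax nWx]; split; split => // ?; apply: nWx; apply: UVW; [left|right].
have [|q [Aq clq]] := cA _ PG; first by exists U0 => // x [].
have [U DU Uq] := AD q Aq.
have [z [[_ nUz] Uz]] := clq (A `\` U) U (ex_intro2 _ _ U DU (fun x h => h))
  (open_nbhs_nbhs (conj (oD U DU) Uq)).
exact: nUz.
Qed.

End specialization.

Lemma continuous_spec_le {S T : topologicalType} {f : S -> T} {x y : S} :
  continuous f -> spec_le x y -> spec_le (f x) (f y).
Proof. by move=> cf xy U oU; apply: (xy (f @^-1` U)); exact: open_comp. Qed.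

Lemma image_upset (S T : topologicalType) (f : S -> T) (A : set S) :
  continuous f -> f @` upset A `<=` upset (f @` A).
Proof.
by move=> cf _ [y [x Ax xy] <-]; exists (f x); [exists x|exact: continuous_spec_le].
Qed.

Lemma upsetS (T : topologicalType) (A B : set T) : A `<=` B -> upset A `<=` upset B.
Proof. by move=> AB y [x /AB Bx xy]; exists x. Qed.

Lemma upset_sub (T : topologicalType) (A : set T) : A `<=` upset A.
Proof. by move=> x Ax; exists x. Qed.

Lemma saturated_upset_sub (T : topologicalType) (A B : set T) :
  saturated B -> A `<=` B -> upset A `<=` B.
Proof. by move=> sB AB y [x /AB Bx xy]; exact: sB xy. Qed.

Lemma nbhs_prod_cylinder (I : Type) (X : I -> topologicalType)
    (f : prod_topology X) i (U : set (X i)) :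
  open U -> U (f i) -> nbhs f [set g : prod_topology X | U (g i)].
Proof.
move=> oU Ufi.
have [cvg_proj _] := @cvg_sup (forall i, X i) I (fun i => Topological.class
    (initial_topology (fun f : (forall i, X i) => f i))) (nbhs f) f _.
apply: (cvg_proj (@cvg_id _ _) i).
by rewrite nbhsE /=; exists [set g : prod_topology X | U (g i)] => //; split=> //; exists U.
Qed.

Section projective_limit.
Context {I : Type} {le : I -> I -> Prop} {X : I -> topologicalType}.
Context {p : forall i j, X j -> X i}.
Local Notation Y := (proj_lim_space le p).

Lemma proj_limP (z : Y) {i j} : le i j -> p i j (sval z j) = sval z i.
Proof. by move=> ij; apply: (set_mem (svalP z)). Qed.

Lemma open_proj_lim_cylinder i (U : set (X i)) :
  open U -> open [set z : Y | U (sval z i)].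
Proof.
move=> oU; exists [set g : prod_topology X | U (g i)] => //.
by rewrite openE => g Ug; apply: nbhs_prod_cylinder.
Qed.

Lemma continuous_proj_lim i : continuous (fun z : Y => sval z i).
Proof. by apply/continuousP => U; exact: open_proj_lim_cylinder. Qed.

Lemma proj_lim_cylinder_bonding {i k} (U : set (X i)) : le i k ->
  [set z : Y | U (sval z i)] = [set z : Y | (p i k @^-1` U) (sval z k)].
Proof. by move=> ik; apply/seteqP; split => z /=; rewrite proj_limP. Qed.

Definition sub_proj_lim (Q : forall i, set (X i)) : set Y :=
  [set x | forall i, Q i (sval x i)].

Lemma saturated_sub_proj_lim (Q : forall i, set (X i)) :
  (forall i, saturated (Q i)) -> saturated (sub_proj_lim Q).
Proof.
move=> sQ x y Qx xy i; apply: sQ (Qx i) _.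
exact: continuous_spec_le (continuous_proj_lim i) xy.
Qed.

Lemma proj_lim_image (K : set Y) {i j} : le i j ->
  p i j @` [set sval x j | x in K] = [set sval x i | x in K].
Proof.
move=> ij; apply/seteqP; split => [_ [_ [x Kx <-] <-]|_ [x Kx <-]].
  by exists x; rewrite ?proj_limP.
by exists (sval x j); [exists x|rewrite proj_limP].
Qed.

Hypothesis ps : projective_system le p.

Lemma open_bonding_preimage {i j} (U : set (X i)) :
  le i j -> open U -> open (p i j @^-1` U).
Proof. by have [_ cp _ _] := ps; move=> ij oU; apply: open_comp => // y _; apply: cp. Qed.

Lemma proj_lim_nbhs_cylinder {x : Y} {B : set Y} : nbhs x B ->
  exists i (U : set (X i)),
    [/\ open U, U (sval x i) & [set z : Y | U (sval z i)] `<=` B].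
Proof.
have [[_ _ [i0] dirI] _ _ _] := ps.
pose G := [set W : set (prod_topology X) | exists i (U : set (X i)),
  [/\ open U, U (sval x i) & forall z : Y, U (sval z i) -> W (sval z)]].
have FG : Filter G.
  constructor; first by exists i0, setT; split => //; exact: openT.
    move=> A A' [i [U [oU Ux AU]]] [j [V [oV Vx A'V]]].
    have [k [ik jk]] := dirI i j.
    exists k, (p i k @^-1` U `&` p j k @^-1` V); split.
    - by apply: openI; apply: open_bonding_preimage.
    - by rewrite /= !proj_limP.
    - by move=> z [/=]; rewrite !proj_limP // => /AU ? /A'V.
  by move=> A A' AA' [i [U [oU Ux AU]]]; exists i, U; split => // z /AU /AA'.
(* [prod_topology X] is the supremum of the initial topologies of the projections. *)
have xG : forall W, nbhs (sval x : prod_topology X) W -> G W.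
  apply: (proj2 (@cvg_sup (forall i, X i) I (fun i => Topological.class
    (initial_topology (fun f : (forall i, X i) => f i))) G _ FG)) => i A /=.
  rewrite (@nbhsE (Topological.Pack (Topological.class
    (initial_topology (fun f : (forall i, X i) => f i))))).
  by move=> -[N [[U oU <-] Nx] NA]; exists i, U; split => // z Uz; apply: NA.
rewrite nbhsE => -[W [[W' oW' eW] Wx] WB].
have [|i [U [oU Ux UW]]] := xG W'; first by apply: open_nbhs_nbhs; rewrite -eW in Wx.
by exists i, U; split => // z /UW Wz; apply: WB; rewrite -eW.
Qed.

Section compact_saturated.
Variable K : set Y.
Let Q i := upset [set sval x i | x in K].

Lemma upset_proj_bonding i j : le i j -> p i j @` Q j `<=` Q i.
Proof.
have [_ cp _ _] := ps.
by move=> ij; rewrite /Q -(proj_lim_image K ij); apply: image_upset; apply: cp.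
Qed.

Lemma upset_bonding_image i j : le i j -> upset (p i j @` Q j) = Q i.
Proof.
move=> ij; apply/seteqP; split.
  by apply: saturated_upset_sub; [exact: upset_saturated|exact: upset_proj_bonding].
by rewrite {1}/Q -(proj_lim_image K ij); apply/upsetS/image_subset/upset_sub.
Qed.

Hypotheses (cK : compact K) (sK : saturated K).

Lemma sub_proj_lim_upset_proj : K = sub_proj_lim Q.
Proof.
have [[_ _ [i0] dirI] _ _ _] := ps.
apply/seteqP; split => [x Kx i|x Qx]; first by apply: upset_sub; exists x.
apply: contrapT => nKx.
pose D := [set W : set Y | exists i (U : set (X i)),
  [/\ open U, ~ U (sval x i) & W = [set z | U (sval z i)]]].
have [||||_ [i [U [oU nUx ->]]] KU] := @compact_directed_cover _ K D cK.
- by move=> _ [i [U [oU _ ->]]]; exact: open_proj_lim_cylinder.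
- by exists set0, i0, set0; split => //; exact: open0.
- move=> _ _ [i [U [oU nUx ->]]] [j [V [oV nVx ->]]].
  have [k [ik jk]] := dirI i j.
  exists [set z : Y | (p i k @^-1` U `|` p j k @^-1` V) (sval z k)].
    exists k, (p i k @^-1` U `|` p j k @^-1` V); split => //.
      by apply: openU; apply: open_bonding_preimage.
    by rewrite /= !proj_limP // => -[].
  by rewrite (proj_lim_cylinder_bonding U ik) (proj_lim_cylinder_bonding V jk) => z [];
    [left|right].
- move=> k Kk.
  have [N [oN Nk nNx]] : exists N : set Y, [/\ open N, N k & ~ N x].
    apply: contrapT => noN; apply/nKx/(sK k) => // N oN Nk.
    by apply: contrapT => nNx; apply: noN; exists N.
  have [i [U [oU Uk UN]]] := proj_lim_nbhs_cylinder (open_nbhs_nbhs (conj oN Nk)).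
  by exists [set z | U (sval z i)] => //; exists i, U; split => // /UN.
- have [_ [k Kk <-] kx] := Qx i.
  exact: nUx (kx U oU (KU k Kk)).
Qed.

End compact_saturated.

End projective_limit.

Section compact_sub_proj_lim.
Context {I : Type} {le : I -> I -> Prop} {X : I -> topologicalType}.
Context {p : forall i j, X j -> X i}.
Local Notation Y := (proj_lim_space le p).
Local Notation tag i U := (existT (fun k => set (X k)) i U).
Hypothesis ps : projective_system le p.
Variable Q : forall i, set (X i).
Hypotheses (cQ : forall i, compact (Q i)) (sQ : forall i, saturated (Q i)).
Hypothesis pQ : forall i j, le i j -> p i j @` Q j `<=` Q i.
Hypothesis sob : forall i, sober (X i).

Definition avoiding (Z : set {i : I & set (X i)}) := [/\
  forall i U, Z (tag i U) -> open U,
  forall i j U, le i j -> Z (tag i U) -> Z (tag j (p i j @^-1` U)),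
  forall i U V, Z (tag i U) -> Z (tag i V) -> Z (tag i (U `|` V)) &
  forall i U, Z (tag i U) -> ~ Q i `<=` U].

Lemma avoiding_bigcup {C : set (set {i : I & set (X i)})} :
  C `<=` avoiding -> total_on C subset -> avoiding (\bigcup_(Z in C) Z).
Proof.
move=> Cav totC; split.
- by move=> i U [Z /Cav [oZ _ _ _]]; apply: oZ.
- by move=> i j U ij [Z CZ ZU]; have [_ pZ _ _] := Cav Z CZ; exists Z => //; apply: pZ.
- move=> i U V [Z CZ ZU] [Z' CZ' Z'V].
  have [ZZ'|Z'Z] := totC _ _ CZ CZ'.
    by have [_ _ uZ' _] := Cav Z' CZ'; exists Z' => //; apply: uZ' => //; apply: ZZ'.
  by have [_ _ uZ _] := Cav Z CZ; exists Z => //; apply: uZ => //; apply: Z'Z.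
- by move=> i U [Z /Cav [_ _ _ qZ] ZU]; apply: qZ.
Qed.

Section cluster.
Context (F : set_system Y) {PF : ProperFilter F}.
Hypothesis FQ : F (sub_proj_lim Q).

Definition null_open : set {i : I & set (X i)} :=
  fun '(existT i U) => open U /\ F [set z : Y | ~ U (sval z i)].

Lemma avoiding_null_open : avoiding null_open.
Proof.
split.
- by move=> i U [].
- move=> i j U ij [oU FU]; split; first exact: (open_bonding_preimage ps _ ij oU).
  by apply: filterS FU => z /=; rewrite proj_limP.
- move=> i U V [oU FU] [oV FV]; split; first exact: openU.
  by apply: filterS (filterI FU FV) => z [nU nV] [].
- move=> i U [_ FU] QU; have [z [Qz nUz]] := filter_ex (filterI FQ FU).
  exact/nUz/QU/Qz.
Qed.

Section maximal.
Variable Z : set {i : I & set (X i)}.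
Hypotheses (nullZ : null_open `<=` Z) (avZ : avoiding Z).
Hypothesis maxZ : forall B, Z `<` B -> ~ avoiding B.

Let V i : set (X i) := \bigcup_(U in [set U | Z (tag i U)]) U.

Lemma bonding_V {i j} : le i j -> p i j @^-1` V i `<=` V j.
Proof.
have [_ pZ _ _] := avZ.
by move=> ij y [U ZU Uy]; exists (p i j @^-1` U) => //; apply: pZ.
Qed.

Lemma not_Q_sub_V i : ~ Q i `<=` V i.
Proof.
have [oZ _ uZ qZ] := avZ.
move=> QV; have [||||U ZU QU] := @compact_directed_cover _ _ [set U | Z (tag i U)] (cQ i).
- by move=> U; apply: oZ.
- exists set0; apply: nullZ; split => /=; first exact: open0.
  by apply: filterS filterT => z _.
- by move=> U U' ZU ZU'; exists (U `|` U') => //; apply: uZ.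
- exact: QV.
- exact: qZ ZU QU.
Qed.

Let covered i (U : set (X i)) k (W : set (X k)) m :=
  p k m @^-1` W `<=` V m `|` p i m @^-1` U.

Lemma covered_up {i U k W m n} : le i m -> le k m -> le m n ->
  covered i U k W m -> covered i U k W n.
Proof.
have [_ _ _ pp] := ps.
move=> im km mn cov y /=; rewrite -(pp _ _ _ km mn) -(pp _ _ _ im mn).
by move=> /cov [/(bonding_V mn)|]; [left|right].
Qed.

(* Z enlarged by (i, U) and closed under bonding preimages and unions; by
   maximality of Z it must cover some Q k. *)
Let extension i (U : set (X i)) : set {k : I & set (X k)} :=
  fun '(existT k W) => open W /\ exists m, [/\ le i m, le k m & covered i U k W m].

Lemma proper_extension {i U} : open U -> ~ Z (tag i U) -> Z `<` extension i U.
Proof.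
have [[le_refl _ _ dirI] _ p_id _] := ps; have [oZ pZ _ _] := avZ.
move=> oU nZU; split; last first.
  by move=> extZ; apply/nZU/extZ; split => //; exists i; split => // y; rewrite /= p_id; right.
case=> k W ZW; split; first exact: oZ ZW.
have [m [im km]] := dirI i k; exists m; split => // y Wy; left.
by exists (p k m @^-1` W) => //; apply: pZ.
Qed.

Lemma extension_covers {i U} : open U -> ~ Z (tag i U) ->
  exists k W, extension i U (tag k W) /\ Q k `<=` W.
Proof.
have [[_ le_trans _ dirI] _ _ pp] := ps.
move=> oU nZU; apply: contrapT => noQ; apply: (maxZ _ (proper_extension oU nZU)); split.
- by move=> k W [].
- move=> k l W kl [oW [m [im km cov]]]; split; first exact: (open_bonding_preimage ps _ kl oW).
  have [n [mn ln]] := dirI m l; exists n; split; [exact: le_trans im mn|by []|].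
  move=> y /=; rewrite (pp _ _ _ kl ln); exact: covered_up km mn cov y.
- move=> k W W' [oW [m [im km cov]]] [oW' [m' [im' km' cov']]].
  split; first exact: openU.
  have [n [mn m'n]] := dirI m m'; exists n; split; [exact: le_trans im mn|exact: le_trans km mn|].
  by move=> y [/(covered_up im km mn cov)|/(covered_up im' km' m'n cov')].
- by move=> k W extW QW; apply: noQ; exists k, W.
Qed.

Lemma eventually_cover {i U} : open U -> ~ Z (tag i U) ->
  exists m, le i m /\ forall n, le m n -> Q n `<=` V n `|` p i n @^-1` U.
Proof.
have [[_ le_trans _ _] _ _ _] := ps.
move=> oU nZU; have [k [W [[_ [m [im km cov]]] QW]]] := extension_covers oU nZU.
exists m; split => // n mn y Qy.
apply: (covered_up im km mn cov); apply: QW.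
by apply: (pQ _ _ (le_trans _ _ _ km mn)); exists y.
Qed.

Lemma irreducible_closed_notV i : irreducible_closed (~` V i).
Proof.
have [[_ le_trans _ dirI] _ _ _] := ps.
have [oZ _ _ _] := avZ.
split.
- by have /existsNP[q /not_implyP[_ nVq]] := not_Q_sub_V i; exists q.
- by rewrite closedC; apply: bigcup_open => U; apply: oZ.
move=> A B cA cB VAB; apply: contrapT => /not_orP[/existsNP[a /not_implyP[nVa nAa]]].
move=> /existsNP[b /not_implyP[nVb nBb]].
have avoid (C : set (X i)) c : ~ V i c -> ~ C c -> ~ Z (tag i (~` C)).
  by move=> nVc nCc ZC; apply/nVc; exists (~` C).
have [mA [imA coverA]] := eventually_cover (closed_openC cA) (avoid _ _ nVa nAa).
have [mB [imB coverB]] := eventually_cover (closed_openC cB) (avoid _ _ nVb nBb).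
have [n [mAn mBn]] := dirI mA mB.
apply: (not_Q_sub_V n) => y Qy.
have [//|nAy] := coverA n mAn y Qy; have [//|nBy] := coverB n mBn y Qy.
by apply: (bonding_V (le_trans _ _ _ imA mAn)); apply: contrapT => /VAB[].
Qed.

Let generic i := cid ((sob i).2 _ (irreducible_closed_notV i)).

Lemma notV_spec_le i y : ~ V i y <-> spec_le y (sval (generic i)).
Proof. by rewrite -closure1_spec_le -(svalP (generic i)). Qed.

Lemma notV_generic i : ~ V i (sval (generic i)).
Proof. exact/notV_spec_le. Qed.

Lemma bonding_generic i j : le i j -> p i j (sval (generic j)) = sval (generic i).
Proof.
have [[_ _ _ dirI] cp _ pp] := ps.
move=> ij; apply: spec_le_anti (sob i).1 _ _.
  by apply/notV_spec_le => /(bonding_V ij); apply: notV_generic.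
move=> U oU Ux; apply: contrapT => nU.
have [|m [im cover]] := eventually_cover oU; first by move=> ZU; apply: (notV_generic i); exists U.
have [n [mn jn]] := dirI m j.
apply: (not_Q_sub_V n) => y Qy; have [//|/= Uy] := cover n mn y Qy.
apply: (bonding_V jn); apply: contrapT => /notV_spec_le yj; apply: nU.
by apply: (continuous_spec_le (cp _ _ ij) yj) => //; rewrite (pp _ _ _ ij jn).
Qed.

Lemma maximal_avoiding_cluster : sub_proj_lim Q `&` cluster F !=set0.
Proof.
pose xs : prod_topology X := fun i => sval (generic i).
have thread : xs \in proj_lim le p by apply/mem_set => i j; exact: bonding_generic.
pose x : Y := exist _ xs thread.
exists x; split.
  move=> i; have /existsNP[q /not_implyP[Qq nVq]] := not_Q_sub_V i.
  exact: sQ Qq (proj1 (notV_spec_le i q) nVq).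
move=> S B FS nB; have [i [U [oU Ux UB]]] := proj_lim_nbhs_cylinder ps nB.
apply: contrapT => nSB; apply: (notV_generic i); exists U => //.
apply: nullZ; split => //=; apply: filterS FS => z Sz Uz.
by apply: nSB; exists z; split => //; apply: UB.
Qed.

End maximal.

Lemma sub_proj_lim_cluster : sub_proj_lim Q `&` cluster F !=set0.
Proof.
have [Z [nullZ avZ maxZ]] := Zorn_bigcup_above avoiding_null_open
  (fun C Cav _ totC => avoiding_bigcup Cav totC).
exact: maximal_avoiding_cluster nullZ avZ maxZ.
Qed.

End cluster.

Lemma compact_sub_proj_lim : compact (sub_proj_lim Q : set Y).
Proof. by move=> F PF FQ; apply: sub_proj_lim_cluster. Qed.

End compact_sub_proj_lim.

Theorem lemma4p3 (I : Type) (le : I -> I -> Prop)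
    (X : I -> topologicalType) (p : forall i j, X j -> X i) :
  projective_system le p ->
  (forall i, sober (X i)) ->
  (* (1) *)
  (forall Q : forall i, set (X i),
     (forall i, compact (Q i) /\ saturated (Q i)) ->
     (forall i j, le i j -> p i j @` Q j `<=` Q i) ->
     let L : set (proj_lim_space le p) :=
       [set x | forall i, Q i (sval x i)] in
     compact L /\ saturated L) /\
  (* (2) *)
  (forall K : set (proj_lim_space le p),
     compact K -> saturated K ->
     let Q : forall i, set (X i) :=
       fun i => upset [set sval x i | x in K] in
     [/\ forall i, compact (Q i) /\ saturated (Q i),
         forall i j, le i j -> p i j @` Q j `<=` Q i,
         K = [set x | forall i, Q i (sval x i)] &
         forall i j, le i j -> upset (p i j @` Q j) = Q i]).
Proof.
move=> ps sob; split.
  move=> Q cQ pQ L; split.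
    exact: compact_sub_proj_lim ps Q (fun i => (cQ i).1) (fun i => (cQ i).2) pQ sob.
  exact: saturated_sub_proj_lim (fun i => (cQ i).2).
move=> K cK sK Q; split.
- move=> i; split; last exact: upset_saturated.
  apply/compact_upset/continuous_compact => //.
  exact/continuous_subspaceT/continuous_proj_lim.
- exact: upset_proj_bonding ps K.
- exact: sub_proj_lim_upset_proj ps K cK sK.
- exact: upset_bonding_image ps K.
Qed.
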